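(* In the construction described in the context, for each good path $\pi$ with $lh(\pi)\le 2$ and each $X\cup\{y\}\subseteq V$ with enumeration $\mathbf{x}$ of $X$: if $(M_{cut},A_{cut}),v_\pi\models D_Xy$ (dependence atom evaluated in the team $A_{cut}$), then $v_\pi(\mathbf{x})\in I(R^{X,y})$.
   Context: Fix an LFD-formula $\varphi$; let $V=V_\varphi$ (variables occurring in $\varphi$, $|V|=k$), $\tau=\tau_\varphi$, $\Phi=Cl(\varphi)$: add to $\{\varphi\}$ all $D_Xy$ with $X\cup\{y\}\subseteq V$ and close under subformulas and single negation. Free variables: $Free(P\mathbf{x})$ = variables of $\mathbf{x}$, $Free(D_Xy)=Free(\mathbb{D}_X\psi)=X$, Booleans take unions. A $\Phi$-type is $\Sigma\subseteq\Phi$ with: $\neg\psi\in\Sigma$ iff $\psi\notin\Sigma$; $\psi\wedge\chi\in\Sigma$ iff both in $\Sigma$; $\mathbb{D}_X\psi\in\Sigma\Rightarrow\psi\in\Sigma$; $D_Xx\in\Sigma$ for $x\in X$; $D_Xy\in\Sigma\ \forall y\in Y$ and $D_Yz\in\Sigma\ \forall z\in Z$ imply $D_Xz\in\Sigma\ \forall z\in Z$. $D^\Sigma_X=\{y\in V\mid D_Xy\in\Sigma\}$; $\Sigma\sim_X\Delta$ iff $\{\psi\in\Sigma\mid Free(\psi)\subseteq D^\Sigma_X\}=\{\psi\in\Delta\mid Free(\psi)\subseteq D^\Sigma_X\}$. A type model is a set $\mathfrak{M}$ of $\Phi$-types with: if $\neg\mathbb{D}_X\neg\psi\in\Sigma\in\mathfrak{M}$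 there is $\Delta\in\mathfrak{M}$ with $\psi\in\Delta$, $\Sigma\sim_X\Delta$; and $\Sigma\sim_\emptyset\Delta$ for all $\Sigma,\Delta\in\mathfrak{M}$. Fix a type model $\mathfrak{M}$ and $\Sigma_0\in\mathfrak{M}$. A good path is $\pi=\langle\Sigma_0,X_1,\Sigma_1,\dots,X_n,\Sigma_n\rangle$ ($n\ge0$) with $\Sigma_i\in\mathfrak{M}$, $X_i\subseteq V$, $\Sigma_{i-1}\sim_{X_i}\Sigma_i$; $last(\pi)=\Sigma_n$, $lh(\pi)=n+1$. Path assignments $v_\pi:V\to$ objects: $v_{\langle\Sigma_0\rangle}(v)=(\langle\Sigma_0\rangle,v)$; for $\pi=(\pi',X,\Sigma)$, $v_\pi(v)=v_{\pi'}(v)$ if $v\in D^{last(\pi')}_X$ and $v_\pi(v)=(\pi,v)$ otherwise. $A=\{v_\pi\mid\pi$ good path$\}$; $M$ has domain $\bigcup_\pi v_\pi[V]$, and an $r$-ary $P\in\tau$ holds of $((\pi_1,x_1),\dots,(\pi_r,x_r))$ iff the $\pi_i$ are linearly ordered by initial segment and $P x_1\dots x_r\in last(\pi_j)$ for the longest $\pi_j$. $\mathbb{M}=(M,A)$. The cut-off model: $A_{cut}=\{v_\pi\mid lh(\pi)\le3\}$, $M_{cut}$ the induced substructure of $M$ on $\bigcup\{v_\pi[V]\mid v_\pi\in A_{cut}\}$. $\tau^+=\tau\cup\{R^{X,y}\mid X\cup\{y\}\subseteq V\}$ with $R^{X,y}$ of arity $|X|$ (with a fixed enumeration $\mathbf{x}$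 of $X$), interpreted in $M_{cut}$ by $I(R^{X,y})=\{v_\pi(\mathbf{x})\mid v_\pi\in A_{cut},\ D_Xy\in last(\pi)\}$. Dependence-model semantics: $s\models D_Xy$ iff for all $t$ in the team, $s\restriction X=t\restriction X$ implies $s(y)=t(y)$. *)

From mathcomp Require Import all_boot finmap.
From mathcomp Require Import boolp.

Set Implicit Arguments.
Unset Strict Implicit.
Unset Printing Implicit Defensive.

Local Open Scope fset_scope.

(* Variables and predicate symbols are natural numbers; the arity of an
   atom P x1..xr is the length of its argument list. *)
Definition var := nat.

(* LFD formulas: P x, D_X y, negation, conjunction, D_X psi. *)
Inductive form : Type :=
| Atom : nat -> seq var -> form
| Dep  : {fset var} -> var -> form
| Neg  : form -> form
| And  : form -> form -> form
| Box  : {fset var} -> form -> form.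

Fixpoint vars (f : form) : {fset var} :=
  match f with
  | Atom _ xs => [fset x | x in xs]
  | Dep X y => X `|` [fset y]
  | Neg g => vars g
  | And g h => vars g `|` vars h
  | Box X g => X `|` vars g
  end.

Fixpoint Free (f : form) : {fset var} :=
  match f with
  | Atom _ xs => [fset x | x in xs]
  | Dep X _ => X
  | Neg g => Free g
  | And g h => Free g `|` Free h
  | Box X _ => X
  end.

Inductive Cl (phi : form) : form -> Prop :=
| cl_base : Cl phi phi
| cl_dep X y : X `<=` vars phi -> y \in vars phi -> Cl phi (Dep X y)
| cl_neg_sub g : Cl phi (Neg g) -> Cl phi g
| cl_and_l g h : Cl phi (And g h) -> Cl phi g
| cl_and_r g h : Cl phi (And g h) -> Cl phi h
| cl_box_sub X g : Cl phi (Box X g) -> Cl phi g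
| cl_sneg g : Cl phi g -> (forall h, g <> Neg h) -> Cl phi (Neg g).

Definition fset_form := form -> Prop.

Definition ftype (phi : form) (S : fset_form) : Prop :=
  (forall g, S g -> Cl phi g) /\
  [/\ (forall g, Cl phi (Neg g) -> (S (Neg g) <-> ~ S g)),
      (forall g h, Cl phi (And g h) -> (S (And g h) <-> S g /\ S h)),
      (forall X g, S (Box X g) -> S g),
      (forall X x, X `<=` vars phi -> x \in X -> S (Dep X x))
    & (forall X Y Z, X `<=` vars phi -> Y `<=` vars phi -> Z `<=` vars phi ->
        (forall y, y \in Y -> S (Dep X y)) ->
        (forall z, z \in Z -> S (Dep Y z)) ->
        forall z, z \in Z -> S (Dep X z))].

Definition Dset (phi : form) (S : fset_form) (X : {fset var}) (y : var) : Prop :=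
  y \in vars phi /\ S (Dep X y).

Definition sim (phi : form) (S : fset_form) (X : {fset var}) (D : fset_form) : Prop :=
  forall g, (forall v, v \in Free g -> Dset phi S X v) -> (S g <-> D g).

Definition type_model (phi : form) (M : fset_form -> Prop) : Prop :=
  [/\ (forall S, M S -> ftype phi S),
      (forall S X g, M S -> S (Neg (Box X (Neg g))) ->
         exists D, [/\ M D, D g & sim phi S X D])
    & (forall S D, M S -> M D -> sim phi S fset0 D)].

(* A path <S0, X1, S1, ..., Xn, Sn> with fixed S0 is represented by the list
   of its steps (Xi, Si) in REVERSE order (most recent step first);
   lh(pi) = size steps + 1. *)
Definition step := ({fset var} * fset_form)%type.
Definition lpath := seq step.

Definition lastT (S0 : fset_form) (p : lpath) : fset_form :=
  match p with [::] => S0 | (_, Sg) :: _ => Sg end.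

Definition lh (p : lpath) : nat := (size p).+1.

Fixpoint good_path (phi : form) (M : fset_form -> Prop) (S0 : fset_form)
  (p : lpath) : Prop :=
  match p with
  | [::] => True
  | (X, Sg) :: p' =>
      [/\ good_path phi M S0 p', M Sg, X `<=` vars phi & sim phi (lastT S0 p') X Sg]
  end.

Definition obj := (lpath * var)%type.

Fixpoint vpath (phi : form) (S0 : fset_form) (p : lpath) (v : var) : obj :=
  match p with
  | [::] => ([::], v)
  | (X, Sg) :: p' =>
      if pselect (Dset phi (lastT S0 p') X v) then vpath phi S0 p' v else (p, v)
  end.

Definition Acut (phi : form) (M : fset_form -> Prop) (S0 : fset_form)
  (s : var -> obj) : Prop :=
  exists p, [/\ good_path phi M S0 p, lh p <= 3 & s = vpath phi S0 p].

Definition sat_dep_cut (phi : form) (M : fset_form -> Prop) (S0 : fset_form)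
  (s : var -> obj) (X : {fset var}) (y : var) : Prop :=
  forall t, Acut phi M S0 t -> (forall x, x \in X -> s x = t x) -> s y = t y.

(* I(R^{X,y}) = { v_pi(x) | v_pi in A_cut, D_X y in last(pi) },
   x the fixed enumeration of X (the canonical enumeration of the fset) *)
Definition I_R (phi : form) (M : fset_form -> Prop) (S0 : fset_form)
  (X : {fset var}) (y : var) (tup : seq obj) : Prop :=
  exists p, [/\ good_path phi M S0 p, lh p <= 3, lastT S0 p (Dep X y)
              & tup = [seq vpath phi S0 p x | x <- enum_fset X]].

From mathcomp Require Import all_boot finmap.
From mathcomp Require Import boolp.
Set Implicit Arguments.
Unset Strict Implicit.
Local Open Scope fset_scope.

(* If D_X y is in last(pi), then pi itself witnesses membership.
   Otherwise extend pi by one step that repeats its last type with the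
   label X; this is a good path (~_X is reflexive) of length <= 3, hence its
   assignment v_pi' lies in A_cut.  Since D_X x is in every type for x in X,
   v_pi' agrees with v_pi on X, so the dependence atom forces
   v_pi'(y) = v_pi(y).  But D_X y is not in last(pi), so v_pi'(y) is the fresh
   object (pi', y), whose path is strictly longer than pi, while every object
   v_pi(v) is labelled by an initial segment of pi: contradiction. *)

Lemma Dset_self (phi : form) (S : fset_form) (X : {fset var}) (x : var) :
  ftype phi S -> X `<=` vars phi -> x \in X -> Dset phi S X x.
Proof.
move=> [_ [_ _ _ HDrefl _]] HX Hx; split; last exact: HDrefl.
by move/fsubsetP: HX; apply.
Qed.

Lemma sim_refl (phi : form) (S : fset_form) (X : {fset var}) : sim phi S X S.
Proof. by []. Qed.

Lemma good_path_last (phi : form) (M : fset_form -> Prop) (S0 : fset_form)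
    (p : lpath) :
  M S0 -> good_path phi M S0 p -> M (lastT S0 p).
Proof. by case: p => [|[X Sg] p] //= _ []. Qed.

Lemma good_path_repeat (phi : form) (M : fset_form -> Prop) (S0 : fset_form)
    (p : lpath) (X : {fset var}) :
  M S0 -> good_path phi M S0 p -> X `<=` vars phi ->
  good_path phi M S0 ((X, lastT S0 p) :: p).
Proof.
move=> HS0 Hp HX /=.
by split; [| exact: good_path_last HS0 Hp | | exact: sim_refl].
Qed.

Lemma vpath_size (phi : form) (S0 : fset_form) (p : lpath) (v : var) :
  size (vpath phi S0 p v).1 <= size p.
Proof.
elim: p => [|[X Sg] p IH] //=.
by case: pselect => _ //=; apply: leq_trans IH (leqnSn _).
Qed.

Lemma vpath_cons_in (phi : form) (S0 : fset_form) (p : lpath)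
    (X : {fset var}) (Sg : fset_form) (v : var) :
  Dset phi (lastT S0 p) X v ->
  vpath phi S0 ((X, Sg) :: p) v = vpath phi S0 p v.
Proof. by move=> Hv /=; case: pselect. Qed.

Lemma vpath_cons_out (phi : form) (S0 : fset_form) (p : lpath)
    (X : {fset var}) (Sg : fset_form) (v : var) :
  ~ Dset phi (lastT S0 p) X v ->
  vpath phi S0 ((X, Sg) :: p) v = ((X, Sg) :: p, v).
Proof. by move=> Hv /=; case: pselect. Qed.

Theorem proposition4p1 (phi : form) (M : fset_form -> Prop) (S0 : fset_form)
  (HM : type_model phi M) (HS0 : M S0)
  (p : lpath) (Hp : good_path phi M S0 p) (Hlh : lh p <= 2)
  (X : {fset var}) (y : var) (HX : X `<=` vars phi) (Hy : y \in vars phi) :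
  sat_dep_cut phi M S0 (vpath phi S0 p) X y ->
  I_R phi M S0 X y [seq vpath phi S0 p x | x <- enum_fset X].
Proof.
move=> Hsat.
have [HDep_last | HDep_not_last] := pselect (lastT S0 p (Dep X y)).
  by exists p; split => //; apply: leq_trans Hlh _.
have [Htype _ _] := HM.
have Hlast_type := Htype _ (good_path_last HS0 Hp).
set p' : lpath := (X, lastT S0 p) :: p.
have Hp'_cut : Acut phi M S0 (vpath phi S0 p').
  by exists p'; split => //; apply: good_path_repeat.
have Hagree : forall x, x \in X -> vpath phi S0 p x = vpath phi S0 p' x.
  by move=> x Hx; rewrite vpath_cons_in //; apply: Dset_self.
have Hfresh : vpath phi S0 p' y = (p', y).
  by apply: vpath_cons_out => -[_ ?].
have := vpath_size phi S0 p y.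
by rewrite (Hsat _ Hp'_cut Hagree) Hfresh /= ltnn.
Qed.
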